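(* Let $X$ be a real Hausdorff locally convex topological vector space, let $f:X\to\overline{\mathbb R}$ be proper, convex and lower semicontinuous, and let $U\subseteq\operatorname{dom} f$ be self-segment-dense in $\operatorname{dom} f$. Then $f=\overline{f_U}$ on $\operatorname{co}(U)$ and $\overline{f_U}=\overline{f_{\operatorname{co}(U)}}$ on $X$.
   Context: $\overline{\mathbb R}=\mathbb R\cup\{\pm\infty\}$; $\operatorname{dom} f=\{x:f(x)<+\infty\}$; proper: $\operatorname{dom} f\ne\emptyset$ and $f>-\infty$. $\operatorname{co}$ is the convex hull. For $W\subseteq\operatorname{dom} f$: $\operatorname{epi} f_W=\{(w,r)\in W\times\mathbb R:f(w)\le r\}$ and $\overline{f_W}$ is the function on $X$ whose epigraph is $\operatorname{cl}(\operatorname{epi} f_W)$ in $X\times\mathbb R$, i.e. $\overline{f_W}(x)=\inf\{r:(x,r)\in\operatorname{cl}(\operatorname{epi} f_W)\}$ ($\inf\emptyset=+\infty$). $[x,y]=\{x+t(y-x):t\in[0,1]\}$. Self-segment-dense: for convex $V$ and $U\subseteq V$, $U$ is self-segment-dense in $V$ if $V\subseteq\operatorname{cl}U$ and for all $x,y\in U$, $[x,y]\cap U$ is dense in $[x,y]$. *)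

From Stdlib Require Import Reals Classical ClassicalEpsilon ClassicalDescription.
Open Scope R_scope.

Definition R_open (S : R -> Prop) : Prop :=
  forall t, S t -> exists eps, 0 < eps /\ forall s, Rabs (s - t) < eps -> S s.

Record LCTVS := {
  carrier :> Type;
  vadd : carrier -> carrier -> carrier;
  vscal : R -> carrier -> carrier;
  vzero : carrier;
  vadd_assoc : forall x y z, vadd x (vadd y z) = vadd (vadd x y) z;
  vadd_comm : forall x y, vadd x y = vadd y x;
  vadd_0l : forall x, vadd vzero x = x;
  vadd_oppl : forall x, vadd (vscal (-1) x) x = vzero;
  vscal_1 : forall x, vscal 1 x = x;
  vscal_assoc : forall a b x, vscal a (vscal b x) = vscal (a * b) x;
  vscal_distr_R : forall a b x, vscal (a + b) x = vadd (vscal a x) (vscal b x);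
  vscal_distr_V : forall a x y, vscal a (vadd x y) = vadd (vscal a x) (vscal a y);
  is_open : (carrier -> Prop) -> Prop;
  open_full : is_open (fun _ => True);
  open_union : forall F : (carrier -> Prop) -> Prop,
      (forall A, F A -> is_open A) -> is_open (fun x => exists A, F A /\ A x);
  open_inter : forall A B, is_open A -> is_open B -> is_open (fun x => A x /\ B x);
  vadd_cont : forall W x y, is_open W -> W (vadd x y) ->
      exists A B, is_open A /\ is_open B /\ A x /\ B y /\
        forall a b, A a -> B b -> W (vadd a b);
  vscal_cont : forall W t x, is_open W -> W (vscal t x) ->
      exists eps B, 0 < eps /\ is_open B /\ B x /\
        forall s b, Rabs (s - t) < eps -> B b -> W (vscal s b);
  hausdorff : forall x y, x <> y ->
      exists A B, is_open A /\ is_open B /\ A x /\ B y /\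
        forall z, A z -> B z -> False;
  loc_convex : forall W x, is_open W -> W x ->
      exists C, is_open C /\ C x /\ (forall z, C z -> W z) /\
        forall y z t, C y -> C z -> 0 <= t <= 1 ->
          C (vadd (vscal t y) (vscal (1 - t) z))
}.

Arguments vadd {_}. Arguments vscal {_}. Arguments is_open {_}.

Section Defs.
Variable X : LCTVS.

Definition convex_set (C : X -> Prop) : Prop :=
  forall x y t, C x -> C y -> 0 <= t <= 1 -> C (vadd (vscal t x) (vscal (1 - t) y)).

Definition co (U : X -> Prop) : X -> Prop :=
  fun x => forall C, convex_set C -> (forall u, U u -> C u) -> C x.

Definition closure (S : X -> Prop) : X -> Prop :=
  fun x => forall A, is_open A -> A x -> exists y, A y /\ S y.

Definition segment (x y : X) : X -> Prop :=
  fun z => exists t, 0 <= t <= 1 /\ z = vadd x (vscal t (vadd y (vscal (-1) x))).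

(** U is self-segment-dense in the convex set V (V ⊆ cl U; for x,y in U,
    [x,y] ∩ U is dense in [x,y] for the relative topology of [x,y]). *)
Definition self_segment_dense (U V : X -> Prop) : Prop :=
  convex_set V /\ (forall u, U u -> V u) /\
  (forall v, V v -> closure U v) /\
  (forall x y, U x -> U y ->
     forall z, segment x y z -> closure (fun w => segment x y w /\ U w) z).

(** closure in X x R (product topology, via basic neighbourhoods A x ]r-eps,r+eps[) *)
Definition closureXR (S : X -> R -> Prop) : X -> R -> Prop :=
  fun x r => forall A eps, is_open A -> A x -> 0 < eps ->
    exists y s, A y /\ Rabs (s - r) < eps /\ S y s.

End Defs.

Arguments convex_set {_}. Arguments co {_}. Arguments closure {_}.
Arguments segment {_}. Arguments self_segment_dense {_}. Arguments closureXR {_}.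

Inductive ER : Type := Fin (r : R) | PInf | MInf.

Definition ER_le (a b : ER) : Prop :=
  match a, b with
  | MInf, _ => True
  | _, PInf => True
  | Fin x, Fin y => x <= y
  | _, _ => False
  end.

Definition ER_lt (a b : ER) : Prop := ER_le a b /\ a <> b.

(** infimum of a set of reals in the extended reals (inf of empty set = +oo) *)
Definition ER_inf (S : R -> Prop) : ER :=
  if excluded_middle_informative (exists r, S r) then
    if excluded_middle_informative (exists m, forall r, S r -> m <= r) then
      Fin (epsilon (inhabits 0)
             (fun m => (forall r, S r -> m <= r) /\
                       forall m', (forall r, S r -> m' <= r) -> m' <= m))
    else MInf
  else PInf.

Section Fun.
Variable X : LCTVS.
Variable f : X -> ER.

Definition dom (x : X) : Prop := f x <> PInf.

Definition proper : Prop := (exists x, dom x) /\ forall x, f x <> MInf.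

Definition convex_fun : Prop :=
  forall x y r s t, ER_le (f x) (Fin r) -> ER_le (f y) (Fin s) -> 0 <= t <= 1 ->
    ER_le (f (vadd (vscal t x) (vscal (1 - t) y))) (Fin (t * r + (1 - t) * s)).

Definition lsc : Prop :=
  forall x r, ER_lt (Fin r) (f x) ->
    exists A, is_open A /\ A x /\ forall y, A y -> ER_lt (Fin r) (f y).

Definition epi_restr (W : X -> Prop) : X -> R -> Prop :=
  fun w r => W w /\ ER_le (f w) (Fin r).

Definition fbar (W : X -> Prop) (x : X) : ER :=
  ER_inf (fun r => closureXR (epi_restr W) x r).

End Fun.

Arguments dom {_}. Arguments proper {_}. Arguments convex_fun {_}.
Arguments lsc {_}. Arguments epi_restr {_}. Arguments fbar {_}.

From Stdlib Require Import Reals Lra Classical ClassicalEpsilon.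
From Stdlib Require Import FunctionalExtensionality PropExtensionality.
Open Scope R_scope.

(* Call z approximable from U if every neighbourhood of z contains points u of U
   of the form u = (1 - b) z + b c with (c, r) in epi f, b <= eps and
   b (r - f z) <= eps; such u satisfy f u <= f z + eps.  Unlike the bare
   inequality, this witnessed form survives composition and convex combinations.
   Points of U are approximable; so are the points of a segment between two
   points of U, because U is dense in the segment and a convex neighbourhood of
   z can be chosen to exclude the points of the segment at relative distance d
   from z, forcing the witness to be close to z along the segment.  Hence all of
   co U is approximable, which puts the graph of f over co U inside cl(epi f_U),
   while lower semicontinuity keeps cl(epi f_U) inside epi f. *)

Arguments vzero {_}. Arguments vadd_assoc {_}. Arguments vadd_comm {_}.
Arguments vadd_0l {_}. Arguments vadd_oppl {_}. Arguments vscal_1 {_}.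
Arguments vscal_assoc {_}. Arguments vscal_distr_R {_}. Arguments vscal_distr_V {_}.
Arguments vadd_cont {_}. Arguments vscal_cont {_}. Arguments hausdorff {_}.
Arguments loc_convex {_}. Arguments open_inter {_}. Arguments open_full {_}.

Section VectorAlgebra.
Variable X : LCTVS.
Implicit Types x y z a b c d : X.

Lemma vadd_0r x : vadd x vzero = x.
Proof. rewrite vadd_comm; apply vadd_0l. Qed.

Lemma vadd_eq_l x y : vadd x y = x -> y = vzero.
Proof.
  intro H. transitivity (vadd (vadd (vscal (-1) x) x) y).
  - rewrite vadd_oppl, vadd_0l; reflexivity.
  - rewrite <- vadd_assoc, H. apply vadd_oppl.
Qed.

Lemma vscal_0l x : vscal 0 x = vzero.
Proof. apply (vadd_eq_l (vscal 0 x)). rewrite <- vscal_distr_R. f_equal; ring. Qed.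

Lemma vscal_0r (k : R) : vscal k (@vzero X) = vzero.
Proof. rewrite <- (vscal_0l vzero), vscal_assoc. f_equal; ring. Qed.

Definition lin4 a b c d (k1 k2 k3 k4 : R) : X :=
  vadd (vscal k1 a) (vadd (vscal k2 b) (vadd (vscal k3 c) (vscal k4 d))).

Lemma lin4_congr a b c d k1 k2 k3 k4 m1 m2 m3 m4 :
  k1 = m1 -> k2 = m2 -> k3 = m3 -> k4 = m4 ->
  lin4 a b c d k1 k2 k3 k4 = lin4 a b c d m1 m2 m3 m4.
Proof. intros; subst; reflexivity. Qed.

Lemma lin4_0 a b c d : vzero = lin4 a b c d 0 0 0 0.
Proof. unfold lin4; rewrite !vscal_0l, !vadd_0l; reflexivity. Qed.

Lemma vadd_swap x y z : vadd x (vadd y z) = vadd y (vadd x z).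
Proof. rewrite !vadd_assoc, (vadd_comm x y); reflexivity. Qed.

Lemma vadd_scal_merge (k m : R) x z :
  vadd (vscal k x) (vadd (vscal m x) z) = vadd (vscal (k + m) x) z.
Proof. rewrite vadd_assoc, vscal_distr_R; reflexivity. Qed.

Lemma lin4_add1 a b c d k k1 k2 k3 k4 :
  vadd (vscal k a) (lin4 a b c d k1 k2 k3 k4) = lin4 a b c d (k + k1) k2 k3 k4.
Proof. apply vadd_scal_merge. Qed.

Lemma lin4_add2 a b c d k k1 k2 k3 k4 :
  vadd (vscal k b) (lin4 a b c d k1 k2 k3 k4) = lin4 a b c d k1 (k + k2) k3 k4.
Proof. unfold lin4; rewrite vadd_swap, vadd_scal_merge; reflexivity. Qed.

Lemma lin4_add3 a b c d k k1 k2 k3 k4 :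
  vadd (vscal k c) (lin4 a b c d k1 k2 k3 k4) = lin4 a b c d k1 k2 (k + k3) k4.
Proof.
  unfold lin4; rewrite vadd_swap, (vadd_swap (vscal k c)), vadd_scal_merge; reflexivity.
Qed.

Lemma lin4_add4 a b c d k k1 k2 k3 k4 :
  vadd (vscal k d) (lin4 a b c d k1 k2 k3 k4) = lin4 a b c d k1 k2 k3 (k + k4).
Proof.
  unfold lin4; rewrite vadd_swap, (vadd_swap (vscal k d)), (vadd_swap (vscal k d)).
  rewrite (vadd_comm (vscal k d) (vscal k4 d)), <- vscal_distr_R, Rplus_comm; reflexivity.
Qed.

End VectorAlgebra.

(* Reduces an equation between linear expressions in the atoms a b c d to the
   equality of their four coefficients, each left as a real-arithmetic goal. *)
Ltac vlin a b c d :=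
  try rewrite <- (vscal_1 a); try rewrite <- (vscal_1 b);
  try rewrite <- (vscal_1 c); try rewrite <- (vscal_1 d);
  repeat rewrite ?vscal_distr_V, ?vscal_assoc, ?vscal_0r, ?vadd_0l, ?vadd_0r;
  match goal with |- ?E = ?F =>
    rewrite <- (vadd_0r _ E), <- (vadd_0r _ F), (lin4_0 _ a b c d) end;
  repeat rewrite <- vadd_assoc;
  repeat rewrite ?lin4_add1, ?lin4_add2, ?lin4_add3, ?lin4_add4;
  apply lin4_congr.

Definition comb {X : LCTVS} (t : R) (x y : X) : X := vadd (vscal t x) (vscal (1 - t) y).

Section Combinations.
Variable X : LCTVS.
Implicit Types x y z a b c e : X.

Lemma comb_id t z : comb t z z = z.
Proof. unfold comb. vlin z (@vzero X) (@vzero X) (@vzero X); ring. Qed.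

Lemma comb_1l x y : comb 1 x y = x.
Proof. unfold comb. vlin x y (@vzero X) (@vzero X); ring. Qed.

Lemma comb_eq_left d z e : d <> 0 -> comb (1 - d) z e = z -> e = z.
Proof.
  intros Hd H.
  assert (E : e = comb (1 - / d) z (comb (1 - d) z e)).
  { unfold comb. vlin z e (@vzero X) (@vzero X); field; auto. }
  rewrite H, comb_id in E. exact E.
Qed.

Lemma Rdiv_in_01 r s : 0 <= r <= s -> 0 < s -> 0 <= r / s <= 1.
Proof.
  intros H Hs. split.
  - apply Rmult_le_pos; [lra | left; apply Rinv_0_lt_compat; lra].
  - apply (Rmult_le_reg_r s); [lra |]. unfold Rdiv. rewrite Rmult_assoc, Rinv_l; lra.
Qed.

Lemma segment_from_point t a b w : 0 <= t <= 1 -> segment a b w ->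
  exists s e, 0 <= s <= 1 /\ (e = a \/ e = b) /\ w = comb (1 - s) (comb t a b) e.
Proof.
  intros Ht (s & Hs & ->).
  destruct (Rle_dec (1 - t) s) as [H1 | H1].
  - destruct (Req_dec t 0) as [-> | Ht0].
    + assert (s = 1) as -> by lra.
      exists 0, b. split; [lra | split; [auto |]].
      unfold comb. vlin a b (@vzero X) (@vzero X); ring.
    + exists ((s - (1 - t)) / t), b. split; [apply Rdiv_in_01; lra | split; [auto |]].
      unfold comb. vlin a b (@vzero X) (@vzero X); field; lra.
  - exists (((1 - t) - s) / (1 - t)), a. split; [apply Rdiv_in_01; lra | split; [auto |]].
    unfold comb. vlin a b (@vzero X) (@vzero X); field; lra.
Qed.

Lemma comb_segment t a b : 0 <= t <= 1 -> segment a b (comb t a b).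
Proof.
  intro Ht. exists (1 - t). split; [lra |].
  unfold comb. vlin a b (@vzero X) (@vzero X); ring.
Qed.

Lemma comb_shift_shift (k m : R) z c e : k + m - k * m <> 0 ->
  comb (1 - k) (comb (1 - m) z c) e =
  comb (1 - (k + m - k * m)) z (comb ((1 - k) * m / (k + m - k * m)) c e).
Proof. intro Hg. unfold comb. vlin z c e (@vzero X); field; lra. Qed.

Lemma comb_shift_comb (t b1 b2 : R) a b c1 c2 : b1 + b2 <> 0 ->
  comb t (comb (1 - b1) a c1) (comb (1 - b2) b c2) =
  comb (1 - (b1 + b2)) (comb t a b) (comb (b1 / (b1 + b2)) (comb t c1 b) (comb t a c2)).
Proof. intro Hg. unfold comb. vlin a b c1 c2; field; lra. Qed.

Lemma comb_continuous (A : X -> Prop) t a b : is_open A -> A (comb t a b) ->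
  exists Aa Ab, is_open Aa /\ is_open Ab /\ Aa a /\ Ab b /\
    forall x y, Aa x -> Ab y -> A (comb t x y).
Proof.
  intros HA Az.
  destruct (vadd_cont A _ _ HA Az) as (A1 & B1 & HA1 & HB1 & A1a & B1b & H1).
  destruct (vscal_cont A1 t a HA1 A1a) as (e1 & Ba & He1 & HBa & Baa & Hba).
  destruct (vscal_cont B1 (1 - t) b HB1 B1b) as (e2 & Bb & He2 & HBb & Bbb & Hbb).
  exists Ba, Bb. repeat split; auto. intros x y Hx Hy. apply H1.
  - apply Hba; auto. rewrite Rminus_diag, Rabs_R0; auto.
  - apply Hbb; auto. rewrite Rminus_diag, Rabs_R0; auto.
Qed.

Lemma open_nbhd_avoiding z q : exists O, is_open O /\ O z /\ (q <> z -> ~ O q).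
Proof.
  destruct (classic (q = z)) as [E | E].
  - exists (fun _ => True). split; [apply open_full | auto].
  - destruct (hausdorff z q) as (A & B & HA & HB & Az & Bq & D); [auto |].
    exists A. split; [auto | split; [auto |]]. intros _ Aq. exact (D q Aq Bq).
Qed.

Lemma segment_convex_nbhd (C : X -> Prop) t d a b w : 0 <= t <= 1 -> 0 < d <= 1 ->
  convex_set C -> C (comb t a b) -> segment a b w -> C w ->
  (forall e, (e = a \/ e = b) -> comb (1 - d) (comb t a b) e <> comb t a b ->
     ~ C (comb (1 - d) (comb t a b) e)) ->
  exists s e, 0 <= s <= d /\ (e = a \/ e = b) /\ w = comb (1 - s) (comb t a b) e.
Proof.
  intros Ht Hd Cconv Cz Hw Cw Cavoid.
  set (z := comb t a b) in *.
  destruct (segment_from_point t a b w Ht Hw) as (s & e & Hs & He & Ew). fold z in Ew.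
  destruct (classic (comb (1 - d) z e = z)) as [E | E].
  - apply comb_eq_left in E; [| lra]. subst e.
    exists 0, z. rewrite Ew, !comb_id. split; [lra | auto].
  - exists s, e. split; [| auto]. split; [lra |].
    destruct (Rle_dec s d) as [H | H]; auto. exfalso. apply (Cavoid e He E).
    replace (comb (1 - d) z e) with (comb (d / s) w z).
    + apply Cconv; auto. apply Rdiv_in_01; lra.
    + rewrite Ew. unfold comb. vlin z e (@vzero X) (@vzero X); field; lra.
Qed.

End Combinations.

Lemma ER_le_weaken (e : ER) (r s : R) : ER_le e (Fin r) -> r <= s -> ER_le e (Fin s).
Proof. destruct e; simpl; intros; auto; lra. Qed.

Section Approximation.
Variable X : LCTVS.
Variable f : X -> ER.
Hypothesis Hproper : proper f.
Hypothesis Hconv : convex_fun f.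

Lemma dom_finite x : dom f x -> exists p, f x = Fin p.
Proof.
  destruct Hproper as [_ Hp]. unfold dom. specialize (Hp x).
  destruct (f x); eauto; congruence.
Qed.

Lemma comb_finite x y t px py : f x = Fin px -> f y = Fin py -> 0 <= t <= 1 ->
  exists p, f (comb t x y) = Fin p /\ p <= t * px + (1 - t) * py.
Proof.
  intros Hx Hy Ht. destruct Hproper as [_ Hp].
  assert (H := Hconv x y px py t). rewrite Hx, Hy in H. simpl in H.
  specialize (H (Rle_refl _) (Rle_refl _) Ht). fold (comb t x y) in H.
  specialize (Hp (comb t x y)). destruct (f (comb t x y)); simpl in H; try tauto; eauto.
Qed.

Lemma shift_le z c p r s : f z = Fin p -> ER_le (f c) (Fin r) -> 0 <= s <= 1 ->
  ER_le (f (comb (1 - s) z c)) (Fin (p + s * (r - p))).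
Proof.
  intros Hz Hc Hs. assert (H := Hconv z c p r (1 - s)). rewrite Hz in H.
  eapply ER_le_weaken; [apply H; simpl; auto; lra | nra].
Qed.

(* u is reached from z by a step of relative length b towards a point c of
   dom f, paying at most eta both in b and in the rise b (r - p) of the chord. *)
Definition approx (p : R) (z u : X) (eta : R) : Prop :=
  exists b c r, 0 <= b <= 1 /\ b <= eta /\ ER_le (f c) (Fin r) /\
    b * (r - p) <= eta /\ u = comb (1 - b) z c.

Lemma approx_weaken p z u e1 e2 : approx p z u e1 -> e1 <= e2 -> approx p z u e2.
Proof. intros (b & c & r & ?) ?. exists b, c, r; intuition lra. Qed.

Lemma approx_refl p z eta : f z = Fin p -> 0 <= eta -> approx p z z eta.
Proof.
  intros Hz Heta. exists 0, z, p. rewrite Hz, Rminus_0_r, comb_id. simpl. intuition lra.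
Qed.

Lemma approx_value p z u eta : f z = Fin p -> approx p z u eta -> ER_le (f u) (Fin (p + eta)).
Proof.
  intros Hz (b & c & r & Hb & _ & Hc & Hbr & ->).
  eapply ER_le_weaken; [apply shift_le; eauto | lra].
Qed.

Lemma approx_trans p z p' z' w e1 e2 : f z = Fin p -> f z' = Fin p' ->
  approx p z z' e1 -> approx p' z' w e2 -> approx p z w (2 * e1 + e2).
Proof.
  intros Hz Hz' (b & c & r & Hb1 & Hb2 & Hcr & Hb4 & ->) (a & e & re & Ha1 & Ha2 & Her & Ha4 & ->).
  assert (Hp' : p' <= p + b * (r - p)).
  { assert (H := shift_le z c p r b Hz Hcr Hb1). rewrite Hz' in H. exact H. }
  set (g := a + b - a * b).
  destruct (Req_dec g 0) as [Hg | Hg].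
  - assert (0 <= b * (1 - a)) by (apply Rmult_le_pos; lra).
    assert (a = 0) as -> by (unfold g in Hg; lra).
    assert (b = 0) as -> by (unfold g in Hg; lra).
    rewrite !Rminus_0_r, !comb_1l. apply approx_refl; auto; lra.
  - assert (Hg0 : 0 < g) by (unfold g in *; nra).
    set (l := (1 - a) * b / g).
    assert (Hl : 0 <= l <= 1) by (apply Rdiv_in_01; unfold g in *; nra).
    exists g, (comb l c e), (l * r + (1 - l) * re).
    rewrite comb_shift_shift by exact Hg. fold g l.
    repeat split; try (unfold g; nra); [apply Hconv; auto |].
    replace (g * (l * r + (1 - l) * re - p))
      with ((1 - a) * (b * (r - p)) + a * (re - p') + a * (p' - p))
      by (unfold l; field_simplify; [unfold g; field |]; lra).
    assert ((1 - a) * (b * (r - p)) <= e1) by (destruct (Rle_dec 0 (b * (r - p))); nra).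
    assert (a * (p' - p) <= e1) by (destruct (Rle_dec 0 (p' - p)); nra).
    lra.
Qed.

Lemma approx_comb a b a' b' t pa pb p e1 e2 :
  f a = Fin pa -> f b = Fin pb -> f (comb t a b) = Fin p -> 0 <= t <= 1 ->
  approx pa a a' e1 -> approx pb b b' e2 -> e1 + e2 <= 1 ->
  approx p (comb t a b) (comb t a' b') ((e1 + e2) * (1 + (t * pa + (1 - t) * pb - p))).
Proof.
  intros Ha Hb Hz Ht (b1 & c1 & r1 & H11 & H12 & H13 & H14 & ->)
    (b2 & c2 & r2 & H21 & H22 & H23 & H24 & ->) He.
  assert (HK : p <= t * pa + (1 - t) * pb).
  { assert (H := Hconv a b pa pb t). rewrite Ha, Hb in H. simpl in H.
    specialize (H (Rle_refl _) (Rle_refl _) Ht). fold (comb t a b) in H.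
    rewrite Hz in H. exact H. }
  set (K := t * pa + (1 - t) * pb - p).
  assert (0 <= K) by (unfold K; lra).
  assert (0 <= (e1 + e2) * K) by (apply Rmult_le_pos; lra).
  set (g := b1 + b2).
  destruct (Req_dec g 0) as [Hg | Hg].
  - assert (b1 = 0) as -> by (unfold g in Hg; lra).
    assert (b2 = 0) as -> by (unfold g in Hg; lra).
    rewrite !Rminus_0_r, !comb_1l. apply approx_refl; auto; nra.
  - set (l := b1 / g).
    assert (Hl : 0 <= l <= 1) by (apply Rdiv_in_01; unfold g in *; lra).
    set (q1 := t * r1 + (1 - t) * pb). set (q2 := t * pa + (1 - t) * r2).
    assert (HX1 : ER_le (f (comb t c1 b)) (Fin q1)) by (apply Hconv; auto; rewrite Hb; simpl; lra).
    assert (HX2 : ER_le (f (comb t a c2)) (Fin q2)) by (apply Hconv; auto; rewrite Ha; simpl; lra).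
    exists g, (comb l (comb t c1 b) (comb t a c2)), (l * q1 + (1 - l) * q2).
    rewrite comb_shift_comb by exact Hg. fold g l.
    repeat split; try (unfold g in *; nra); [apply Hconv; auto |].
    replace (g * (l * q1 + (1 - l) * q2 - p))
      with (t * (b1 * (r1 - pa)) + (1 - t) * (b2 * (r2 - pb)) + g * K)
      by (unfold l, q1, q2, K; field_simplify; [unfold g; field |]; lra).
    assert (t * (b1 * (r1 - pa)) <= e1) by (destruct (Rle_dec 0 (b1 * (r1 - pa))); nra).
    assert ((1 - t) * (b2 * (r2 - pb)) <= e2) by (destruct (Rle_dec 0 (b2 * (r2 - pb))); nra).
    assert (g * K <= (e1 + e2) * K) by (apply Rmult_le_compat_r; unfold g; lra).
    nra.
Qed.

Variable U : X -> Prop.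
Hypothesis HU : forall u, U u -> dom f u.
Hypothesis Hsegdense : forall x y, U x -> U y ->
  forall z, segment x y z -> closure (fun w => segment x y w /\ U w) z.

Definition approximable (z : X) : Prop :=
  exists p, f z = Fin p /\ forall A eps, is_open A -> A z -> 0 < eps ->
    exists u, U u /\ A u /\ approx p z u eps.

Lemma approximable_U u : U u -> approximable u.
Proof.
  intro Uu. destruct (dom_finite u (HU u Uu)) as [p Hu].
  exists p. split; [exact Hu |]. intros A eps HA Au Heps.
  exists u. split; [exact Uu | split; [exact Au |]]. apply approx_refl; auto; lra.
Qed.

Lemma approximable_segment a b t : U a -> U b -> 0 <= t <= 1 -> approximable (comb t a b).
Proof.
  intros Ua Ub Ht.
  destruct (dom_finite a (HU a Ua)) as [pa Ha].
  destruct (dom_finite b (HU b Ub)) as [pb Hb].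
  destruct (comb_finite a b t pa pb Ha Hb Ht) as (p & Hz & _).
  set (z := comb t a b) in *.
  exists p. split; [exact Hz |]. intros A eps HA Az Heps.
  set (S := Rabs (pa - p) + Rabs (pb - p)).
  assert (HS : 0 <= S)
    by (unfold S; pose proof (Rabs_pos (pa - p)); pose proof (Rabs_pos (pb - p)); lra).
  set (d := eps / (1 + eps + S)).
  assert (Hd : d * (1 + eps + S) = eps) by (unfold d; field; lra).
  assert (Hd0 : 0 < d) by (unfold d; apply Rdiv_lt_0_compat; lra).
  destruct (open_nbhd_avoiding X z (comb (1 - d) z a)) as (Oa & HOa & Oaz & Oa_avoid).
  destruct (open_nbhd_avoiding X z (comb (1 - d) z b)) as (Ob & HOb & Obz & Ob_avoid).
  destruct (loc_convex (fun x => A x /\ Oa x /\ Ob x) z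
              ltac:(repeat apply open_inter; auto) (conj Az (conj Oaz Obz)))
    as (C & HC & Cz & CW & Cconv).
  destruct (Hsegdense a b Ua Ub z (comb_segment X t a b Ht) C HC Cz) as (w & Cw & Hw & Uw).
  destruct (segment_convex_nbhd X C t d a b w Ht ltac:(nra) Cconv Cz Hw Cw)
    as (s & e & Hs & He & Ew).
  { intros e [-> | ->] Hne Ce; destruct (CW _ Ce) as (_ & Oae & Obe);
      [exact (Oa_avoid Hne Oae) | exact (Ob_avoid Hne Obe)]. }
  exists w. split; [exact Uw | split; [apply (CW w Cw) |]].
  assert (Hfe : exists pe, f e = Fin pe /\ pe - p <= S).
  { destruct He as [-> | ->]; [exists pa | exists pb]; split; auto; unfold S;
      pose proof (Rle_abs (pa - p)); pose proof (Rle_abs (pb - p));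
      pose proof (Rabs_pos (pa - p)); pose proof (Rabs_pos (pb - p)); lra. }
  destruct Hfe as (pe & Hpe & HpeS).
  exists s, e, pe. rewrite Hpe. simpl. repeat split; auto; try nra.
Qed.

Lemma approximable_comb a b t : approximable a -> approximable b -> 0 <= t <= 1 ->
  approximable (comb t a b).
Proof.
  intros (pa & Ha & Ia) (pb & Hb & Ib) Ht.
  destruct (comb_finite a b t pa pb Ha Hb Ht) as (p & Hz & Hpz).
  exists p. split; [exact Hz |]. intros A eps HA Az Heps.
  set (K := t * pa + (1 - t) * pb - p).
  set (eta := Rmin (1 / 4) (eps / (8 * (1 + K)))).
  assert (Heta0 : 0 < eta).
  { apply Rmin_glb_lt; [lra |]. apply Rdiv_lt_0_compat; unfold K; lra. }
  assert (Heta1 : eta <= 1 / 4) by apply Rmin_l.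
  assert (Heta2 : eta * (8 * (1 + K)) <= eps).
  { assert (H : eta <= eps / (8 * (1 + K))) by apply Rmin_r.
    apply (Rmult_le_compat_r (8 * (1 + K))) in H; [| unfold K; lra].
    unfold Rdiv in H. rewrite Rmult_assoc, Rinv_l in H; unfold K in *; lra. }
  destruct (comb_continuous X A t a b HA Az) as (Aa & Ab & HAa & HAb & Aaa & Abb & HAc).
  destruct (Ia Aa eta HAa Aaa Heta0) as (a' & Ua' & Aa' & Ra).
  destruct (Ib Ab eta HAb Abb Heta0) as (b' & Ub' & Ab' & Rb).
  assert (Rz := approx_comb a b a' b' t pa pb p eta eta Ha Hb Hz Ht Ra Rb ltac:(lra)).
  fold K in Rz.
  destruct (approximable_segment a' b' t Ua' Ub' Ht) as (p' & Hz' & I').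
  destruct (I' A (eps / 2) HA (HAc a' b' Aa' Ab') ltac:(lra)) as (w & Uw & Aw & Rw).
  exists w. split; [exact Uw | split; [exact Aw |]].
  eapply approx_weaken; [exact (approx_trans _ _ _ _ _ _ _ Hz Hz' Rz Rw) |].
  assert (0 <= K) by (unfold K; lra). nra.
Qed.

Lemma approximable_co x : co U x -> approximable x.
Proof.
  intro Hx. apply Hx.
  - intros a b t Ha Hb Ht. exact (approximable_comb a b t Ha Hb Ht).
  - exact approximable_U.
Qed.

Lemma approximable_closureXR z r : approximable z -> ER_le (f z) (Fin r) ->
  closureXR (epi_restr f U) z r.
Proof.
  intros (p & Hz & I) Hr. rewrite Hz in Hr. simpl in Hr.
  intros A eps HA Az Heps.
  destruct (I A (eps / 2) HA Az ltac:(lra)) as (u & Uu & Au & Ru).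
  exists u, (r + eps / 2). split; [exact Au | split].
  - replace (r + eps / 2 - r) with (eps / 2) by ring. rewrite Rabs_pos_eq; lra.
  - split; [exact Uu |]. eapply ER_le_weaken; [exact (approx_value _ _ _ _ Hz Ru) | lra].
Qed.

End Approximation.

Lemma closureXR_epi_le {X : LCTVS} (f : X -> ER) (W : X -> Prop) x r :
  lsc f -> closureXR (epi_restr f W) x r -> ER_le (f x) (Fin r).
Proof.
  intros Hl Hcl. destruct (classic (ER_le (f x) (Fin r))) as [H | H]; auto. exfalso.
  set (r' := match f x with Fin v => (r + v) / 2 | _ => r + 1 end).
  assert (Hr' : r < r' /\ ER_lt (Fin r') (f x)).
  { unfold r'. destruct (f x) as [v | |]; simpl in H |- *.
    - split; [lra |]. split; simpl; [lra |]. intro E; injection E; lra.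
    - split; [lra |]. split; simpl; auto. discriminate.
    - tauto. }
  destruct Hr' as [Hrr Hlt].
  destruct (Hl x r' Hlt) as (A & HA & Ax & HAl).
  destruct (Hcl A (r' - r) HA Ax ltac:(lra)) as (y & s & Ay & Hs & _ & Hfy).
  destruct (HAl y Ay) as [Hle _]. apply Rabs_def2 in Hs.
  destruct (f y); simpl in *; auto; lra.
Qed.

Lemma closureXR_mono {X : LCTVS} (S T : X -> R -> Prop) x r :
  (forall y s, S y s -> T y s) -> closureXR S x r -> closureXR T x r.
Proof.
  intros HST Hr A eps HA Ax Heps.
  destruct (Hr A eps HA Ax Heps) as (y & s & Ay & Hs & Sys). exists y, s; auto.
Qed.

Lemma closureXR_closure_sub {X : LCTVS} (S T : X -> R -> Prop) x r :
  (forall y s, S y s -> closureXR T y s) -> closureXR S x r -> closureXR T x r.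
Proof.
  intros HST Hr A eps HA Ax Heps.
  destruct (Hr A (eps / 2) HA Ax ltac:(lra)) as (y & s & Ay & Hs & Sys).
  destruct (HST y s Sys A (eps / 2) HA Ay ltac:(lra)) as (y' & s' & Ay' & Hs' & Tys').
  exists y', s'. split; [exact Ay' | split; [| exact Tys']].
  apply Rabs_def2 in Hs. apply Rabs_def2 in Hs'. apply Rabs_def1; lra.
Qed.

Lemma ER_inf_Rge (p : R) : ER_inf (fun r => p <= r) = Fin p.
Proof.
  unfold ER_inf.
  destruct (ClassicalDescription.excluded_middle_informative (exists r, p <= r)) as [_ | N].
  2: { exfalso; apply N; exists p; lra. }
  destruct (ClassicalDescription.excluded_middle_informative
              (exists m, forall r, p <= r -> m <= r)) as [_ | N].
  2: { exfalso; apply N; exists p; auto. }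
  f_equal.
  set (P := fun m => (forall r, p <= r -> m <= r) /\
                     forall m', (forall r, p <= r -> m' <= r) -> m' <= m).
  assert (HP : exists m, P m) by (exists p; split; auto; intros m' Hm'; apply Hm'; lra).
  destruct (epsilon_spec (inhabits 0) P HP) as [H1 H2].
  fold P. apply Rle_antisym; [apply H1; lra | apply H2; auto].
Qed.

Theorem mainTheorem8 (X : LCTVS) (f : X -> ER) (U : X -> Prop)
  (Hproper : proper f) (Hconv : convex_fun f) (Hlsc : lsc f)
  (HU : forall u, U u -> dom f u)
  (Hdense : self_segment_dense U (dom f)) :
  (forall x, co U x -> f x = fbar f U x) /\
  (forall x, fbar f U x = fbar f (co U) x).
Proof.
  destruct Hdense as (_ & _ & _ & Hsegdense).
  pose proof (approximable_co X f Hproper Hconv U HU Hsegdense) as Happrox.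
  assert (Hepi_co : forall y s, epi_restr f (co U) y s -> closureXR (epi_restr f U) y s).
  { intros y s [Hy Hys]. exact (approximable_closureXR X f Hconv U y s (Happrox y Hy) Hys). }
  split.
  - intros x Hx. destruct (Happrox x Hx) as (p & Hp & _).
    unfold fbar. rewrite Hp, <- (ER_inf_Rge p). f_equal.
    apply functional_extensionality; intro r. apply propositional_extensionality. split.
    + intro Hr. apply Hepi_co. split; [exact Hx | rewrite Hp; exact Hr].
    + intro Hr. apply closureXR_epi_le in Hr; [| exact Hlsc]. rewrite Hp in Hr. exact Hr.
  - intro x. unfold fbar. f_equal.
    apply functional_extensionality; intro r. apply propositional_extensionality. split.
    + apply closureXR_mono. intros y s [Uy Hys]. split; [| exact Hys].
      intros C _ HUC. exact (HUC y Uy).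
    + apply closureXR_closure_sub, Hepi_co.
Qed.
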